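(* Let $p$ and $r$ be states. Then $r$ is an extreme point of the convex set $p^{TP}=\{Tp: T\in TP(d)\}$ if and only if $\beta(r)$ is tightly thermomajorized by $\beta(p)$.
   Context: Fix an integer $d\ge 2$, an inverse temperature $\beta\in(0,\infty)$ and pairwise distinct real numbers $E_0=0,E_1,\dots,E_{d-1}$. Put $q_{m,n}=e^{-\beta(E_m-E_n)}$, $Z=\sum_j q_{j,0}$, and $g_i=q_{i,0}/Z$ (Gibbs vector). A state is a probability vector $p\in\mathbb{R}^d$. $TP(d)$ is the set of $d\times d$ real matrices with non-negative entries, columns summing to $1$, and $Tg=g$. Thermomajorization curve: for a state $p$ choose a permutation $\pi$ of $\{0,\dots,d-1\}$ with $p_{\pi(0)}/g_{\pi(0)}\ge p_{\pi(1)}/g_{\pi(1)}\ge\dots\ge p_{\pi(d-1)}/g_{\pi(d-1)}$ (the tuple $(\pi(0),\dots,\pi(d-1))$ is called a $\beta$-order of $p$). Let $x_k=\sum_{i\le k}g_{\pi(i)}$, $y_k=\sum_{i\le k}p_{\pi(i)}$. The curve $\beta(p)$ is the graph of the concave piecewise-linear function on $[0,1]$ through $(0,0),(x_0,y_0),\dots,(x_{d-1},y_{d-1})=(1,1)$ (it does not depend on the choice of $\beta$-order); its slopes are the numbers $p_i/g_i$. The elbows of $\beta(p)$ are the points $(x_k,y_k)$, $k=0,\dots,d-2$. $\beta(p)$ tightly thermomajorizes $\beta(r)$ (equivalently $\beta(r)$ is tightly thermomajorized by $\beta(p)$) if every elbow $(x,y)$ of $\beta(r)$ lies on $\beta(p)$,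 i.e. $y=\beta(p)(x)$ where $\beta(p)(\cdot)$ denotes the function whose graph is the curve. *)

From HB Require Import structures.
From mathcomp Require Import all_boot all_order all_algebra.
From mathcomp Require Import fingroup perm.
From mathcomp Require Import reals sequences exp.
Set Implicit Arguments. Unset Strict Implicit. Unset Printing Implicit Defensive.
Import Order.TTheory GRing.Theory Num.Theory.
Local Open Scope ring_scope.

Section Thermo.
Variables (R : realType) (d : nat).

Definition qfac (beta : R) (E : 'I_d -> R) (m n : 'I_d) : R :=
  expR (- (beta * (E m - E n))).

Definition gibbs (beta : R) (E : 'I_d -> R) (i0 : 'I_d) (i : 'I_d) : R :=
  qfac beta E i i0 / \sum_(j : 'I_d) qfac beta E j i0.

Definition is_state (p : 'I_d -> R) : Prop :=
  (forall i, 0 <= p i) /\ \sum_(i : 'I_d) p i = 1.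

Definition mxapp (T : 'M[R]_d) (p : 'I_d -> R) : 'I_d -> R :=
  fun i => \sum_(j : 'I_d) T i j * p j.

Definition is_TP (g : 'I_d -> R) (T : 'M[R]_d) : Prop :=
  [/\ forall i j, 0 <= T i j,
      forall j, \sum_(i : 'I_d) T i j = 1
    & forall i, mxapp T g i = g i].

Definition TP_orbit (g p : 'I_d -> R) (r : 'I_d -> R) : Prop :=
  exists T, is_TP g T /\ forall i, r i = mxapp T p i.

Definition is_extreme_point (S : ('I_d -> R) -> Prop) (r : 'I_d -> R) : Prop :=
  S r /\
  forall x y : 'I_d -> R, S x -> S y -> forall t : R, 0 < t -> t < 1 ->
    (forall i, r i = t * x i + (1 - t) * y i) -> forall i, x i = y i.

Definition is_beta_order (g p : 'I_d -> R) (pi : 'S_d) : Prop :=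
  forall i j : 'I_d, (i <= j)%N -> p (pi j) / g (pi j) <= p (pi i) / g (pi i).

Definition curve_x (g : 'I_d -> R) (pi : 'S_d) (k : nat) : R :=
  \sum_(i : 'I_d | (i <= k)%N) g (pi i).
Definition curve_y (p : 'I_d -> R) (pi : 'S_d) (k : nat) : R :=
  \sum_(i : 'I_d | (i <= k)%N) p (pi i).
(* x_{k-1}, with x_{-1} = 0 *)
Definition curve_x_prev (g : 'I_d -> R) (pi : 'S_d) (k : nat) : R :=
  \sum_(i : 'I_d | (i < k)%N) g (pi i).

(* The piecewise-linear function on [0,1] through (0,0),(x_0,y_0),...,(x_{d-1},y_{d-1}):
   on the k-th segment [x_{k-1}, x_k] it has slope p_{pi k}/g_{pi k}; written as
   the sum over segments of slope * (length of [0,x] ∩ [x_{k-1},x_k]). *)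
Definition curve_fun (g p : 'I_d -> R) (pi : 'S_d) (x : R) : R :=
  \sum_(k : 'I_d) (p (pi k) / g (pi k)) *
     (Num.min x (curve_x g pi k) - Num.min x (curve_x_prev g pi k)).

Definition on_curve (g p : 'I_d -> R) (x y : R) : Prop :=
  forall pi : 'S_d, is_beta_order g p pi -> y = curve_fun g p pi x.

(* beta(p) tightly thermomajorizes beta(r): every elbow (x_k,y_k), k = 0..d-2,
   of beta(r) lies on beta(p). *)
Definition tightly_thermomajorizes (g p r : 'I_d -> R) : Prop :=
  forall sigma : 'S_d, is_beta_order g r sigma ->
  forall k : nat, (k.+1 < d)%N ->
    on_curve g p (curve_x g sigma k) (curve_y r sigma k).

End Thermo.

From HB Require Import structures.
From mathcomp Require Import all_boot all_order all_algebra.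
From mathcomp Require Import fingroup perm.
From mathcomp Require Import reals sequences exp.
From mathcomp Require Import ring lra.

(* For T in TP(d), a beta-order s and an index k, the partial sum
   sum_{i <= k} (T p)_{s i} equals sum_j w_j p_j with weights
   w_j = sum_{i <= k} T_{s i, j} in [0, 1] and sum_j w_j g_j = x_k.
   A fractional-knapsack argument bounds such a sum by beta(p)(x_k), with
   equality when the weights are greedy: w_{j1} < 1 and w_{j2} > 0 force
   p_{j1}/g_{j1} <= p_{j2}/g_{j2}.  So every point of p^TP lies below beta(p)
   at the abscissae x_k.

   If r = T p is extreme, the weights of any beta-order of r are greedy:
   otherwise there are levels a before a' in that order with T_{a' j1} > 0,
   T_{a j2} > 0 and p_{j1}/g_{j1} > p_{j2}/g_{j2}.  A rank-one perturbation of
   T then yields r + al u in p^TP with u = e_a - e_{a'} and al > 0, and a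
   two-level partial swap of that point overshoots to r + be u with be < 0,
   so r is interior to a segment of p^TP.  Hence the elbows of beta(r) lie on
   beta(p).

   Conversely, if they do, the matrix whose entry (a, b) is the length of the
   overlap of the x-intervals occupied by level a in beta(r) and by level b in
   beta(p), divided by g_b, is in TP(d) and maps p to r.  If moreover
   r = t x + (1 - t) y with x, y in p^TP, the elbow heights of x and y along
   the beta-order of r are at most those of beta(p), which r attains, so x and
   y have the same partial sums, i.e. x = y. *)

Set Implicit Arguments. Unset Strict Implicit. Unset Printing Implicit Defensive.
Import Order.TTheory GRing.Theory Num.Theory.
Local Open Scope ring_scope.

Section Curves.
Variables (R : realType) (d : nat).
Implicit Types (f g p : 'I_d -> R) (s : 'S_d).

Lemma sumr_perm f s : \sum_i f (s i) = \sum_i f i.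
Proof. by rewrite [RHS](reindex_inj (@perm_inj _ s)). Qed.

Lemma ler_sum_subset (P Q : pred 'I_d) f : (forall i, 0 <= f i) ->
  (forall i, P i -> Q i) -> \sum_(i | P i) f i <= \sum_(i | Q i) f i.
Proof.
move=> f_ge0 PQ; rewrite [leLHS]big_mkcond [leRHS]big_mkcond /=.
apply: ler_sum => i _; case: ifP => [/PQ -> //|_]; by case: ifP.
Qed.

Lemma ltr_sum_at (P : pred 'I_d) (F G : 'I_d -> R) l : P l ->
  (forall i, F i <= G i) -> F l < G l ->
  \sum_(i | P i) F i < \sum_(i | P i) G i.
Proof.
move=> Pl FG FGl; rewrite (bigD1 l) //= [ltRHS](bigD1 l) //=.
by apply: ltr_leD => //; apply: ler_sum.
Qed.

Lemma curve_x_prev0 f s : curve_x_prev f s 0 = 0.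
Proof. by rewrite /curve_x_prev big_pred0. Qed.

Lemma curve_x_prevS f s m : curve_x_prev f s m.+1 = curve_x f s m.
Proof. by apply: eq_bigl => i; rewrite ltnS. Qed.

Lemma curve_xE f s (m : 'I_d) : curve_x f s m = curve_x_prev f s m + f (s m).
Proof.
rewrite /curve_x (bigD1 m) //= addrC; congr (_ + _).
by apply: eq_bigl => i; rewrite ltn_neqAle andbC -val_eqE.
Qed.

Lemma curve_x_prev_full f s : curve_x_prev f s d = \sum_i f i.
Proof. by rewrite -(sumr_perm f s); apply: eq_bigl => i; rewrite ltn_ord. Qed.

Lemma curve_x_last f s m : m.+1 = d -> curve_x f s m = \sum_i f i.
Proof. by move=> m_last; rewrite -curve_x_prevS m_last curve_x_prev_full. Qed.

Lemma curve_x_prev_le f s m : (forall i, 0 <= f i) ->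
  curve_x_prev f s m <= curve_x f s m.
Proof. by move=> f_ge0; apply: ler_sum_subset => // i /ltnW. Qed.

Lemma curve_x_le_prev f s m l : (forall i, 0 <= f i) -> (m < l)%N ->
  curve_x f s m <= curve_x_prev f s l.
Proof. by move=> f_ge0 ml; apply: ler_sum_subset => // i /leq_ltn_trans; apply. Qed.

Lemma curve_x_le_sum f s m : (forall i, 0 <= f i) -> curve_x f s m <= \sum_i f i.
Proof.
by move=> f_ge0; rewrite -(sumr_perm f s) [leRHS]big_mkcond; apply: ler_sum_subset.
Qed.

Lemma curve_x_inj f f' s : (forall m : 'I_d, curve_x f s m = curve_x f' s m) ->
  forall i, f i = f' i.
Proof.
move=> eq_x i; rewrite -(permKV s i); set m := (s^-1)%g i.
have eq_prev : curve_x_prev f s m = curve_x_prev f' s m.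
  case: m => [[|m] lt_md]; first by rewrite !curve_x_prev0.
  by rewrite !curve_x_prevS (eq_x (Ordinal (ltnW lt_md))).
by have := eq_x m; rewrite !curve_xE eq_prev => /addrI.
Qed.

Definition seg_len g s (l : nat) (x : R) :=
  Num.min x (curve_x g s l) - Num.min x (curve_x_prev g s l).

Lemma curve_funE g p s x :
  curve_fun g p s x = \sum_l p (s l) / g (s l) * seg_len g s l x.
Proof. by []. Qed.

Section SegLen.
Variables (g : 'I_d -> R) (s : 'S_d).
Hypotheses (g_ge0 : forall i, 0 <= g i) (g_sum1 : \sum_i g i = 1).

Lemma seg_len_full (l : 'I_d) x : curve_x g s l <= x -> seg_len g s l x = g (s l).
Proof.
move=> lx; rewrite /seg_len !min_r //; last exact: le_trans (curve_x_prev_le _ _ g_ge0) lx.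
by rewrite curve_xE addrC addKr.
Qed.

Lemma seg_len_empty l x : x <= curve_x_prev g s l -> seg_len g s l x = 0.
Proof.
move=> xl; have := le_trans xl (curve_x_prev_le s l g_ge0).
by rewrite /seg_len => /min_l ->; rewrite min_l // subrr.
Qed.

Lemma seg_len1 (l : 'I_d) : seg_len g s l 1 = g (s l).
Proof. by apply: seg_len_full; rewrite -g_sum1 curve_x_le_sum. Qed.

Lemma seg_len0 l : seg_len g s l 0 = 0.
Proof. by apply: seg_len_empty; apply: sumr_ge0. Qed.

Lemma seg_len_le l x y : x <= y -> seg_len g s l x <= seg_len g s l y.
Proof.
move=> xy; have := curve_x_prev_le s l g_ge0; rewrite /seg_len.
move: (curve_x g s l) (curve_x_prev g s l) => A B BA; rewrite !minEle.
by case: (leP x A); case: (leP x B); case: (leP y A); case: (leP y B); lra.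
Qed.

Lemma sum_seg_len x : 0 <= x <= 1 -> \sum_(l < d) seg_len g s l x = x.
Proof.
case/andP=> x_ge0 x_le1; rewrite -(big_mkord xpredT (fun l => seg_len g s l x)).
under eq_bigr do rewrite /seg_len -curve_x_prevS.
by rewrite telescope_sumr // curve_x_prev_full g_sum1 curve_x_prev0 min_l // min_r // subr0.
Qed.

Lemma exists_segment x : 0 <= x <= 1 ->
  exists m : 'I_d, curve_x_prev g s m <= x <= curve_x g s m.
Proof.
case/andP=> x_ge0 x_le1.
have d_gt0 : (0 < d)%N.
  case: (posnP d) => [d0|//]; move: g_sum1.
  rewrite big1 => [/esym/eqP|[i lt_id] _]; first by rewrite oner_eq0.
  by exfalso; move: lt_id; rewrite d0.
pose P n := (n < d)%N && (x <= curve_x g s n).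
have [|m /andP[md xm] m_min] := ex_minnP (ex_intro P d.-1 _).
  by rewrite /P prednK // leqnn curve_x_last ?prednK ?g_sum1 /=.
exists (Ordinal md); rewrite /= xm andbT.
case: m m_min md {xm} => [|m] m_min md; first by rewrite curve_x_prev0.
rewrite curve_x_prevS leNgt; apply/negP => lt_xm.
by have := m_min m; rewrite /P (ltnW md) (ltW lt_xm) ltnn => /(_ isT).
Qed.

End SegLen.
End Curves.

Lemma beta_order_exists (R : realType) (d : nat) (g p : 'I_d -> R) :
  exists s : 'S_d, is_beta_order g p s.
Proof.
pose geq_ratio i j := p j / g j <= p i / g i.
have geq_trans : transitive geq_ratio by move=> j i k ij jk; apply: le_trans jk ij.
have sorted_enum := sort_sorted (fun i j => le_total (p j / g j) (p i / g i)) (enum 'I_d).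
set sq := sort geq_ratio (enum 'I_d) in sorted_enum.
have size_sq : size sq = d by rewrite size_sort size_enum_ord.
have uniq_sq : uniq sq by rewrite sort_uniq enum_uniq.
have nthE (i : 'I_d) x0 : nth i sq i = nth x0 sq i.
  by apply: set_nth_default; rewrite size_sq.
have nth_inj : injective (fun i : 'I_d => nth i sq i).
  move=> i j; rewrite (nthE j i) => /eqP.
  by rewrite nth_uniq ?size_sq // => /eqP /val_inj.
exists (perm nth_inj) => i j ij; rewrite !permE (nthE j i).
by apply: (sorted_leq_nth geq_trans (fun=> lexx _)) => //; rewrite inE size_sq.
Qed.

Section Knapsack.
Variables (R : realType) (d : nat) (g p : 'I_d -> R) (s : 'S_d).
Hypotheses (g_gt0 : forall i, 0 < g i) (g_sum1 : \sum_i g i = 1).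
Hypothesis s_order : is_beta_order g p s.
Variable w : 'I_d -> R.
Hypothesis w01 : forall j, 0 <= w j <= 1.

Let g_ge0 i : 0 <= g i. Proof. exact: ltW. Qed.
Local Notation x := (\sum_j w j * g j).
Local Notation rho l := (p (s l) / g (s l)).

Let wg_ge0 j : 0 <= w j * g j.
Proof. by case/andP: (w01 j) => *; apply: mulr_ge0. Qed.

Let wg_le j : w j * g j <= g j.
Proof. by case/andP: (w01 j) => *; apply: ler_piMl. Qed.

Let x01 : 0 <= x <= 1.
Proof. by rewrite sumr_ge0 //= -g_sum1 ler_sum. Qed.

Section AtSegment.
Variable m : 'I_d.

(* Both the greedy filling seg_len and the filling w (s l) * g (s l) have total
   mass x, so any common slope, here rho m, may be subtracted. *)
Lemma knapsack_gap : curve_fun g p s x - \sum_j w j * p j =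
  \sum_l (rho l - rho m) * (seg_len g s l x - w (s l) * g (s l)).
Proof.
have sum_seg : \sum_(l : 'I_d) seg_len g s l x = x by rewrite sum_seg_len.
have sum_u : \sum_(l : 'I_d) w (s l) * g (s l) = x by rewrite (sumr_perm (fun j => w j * g j)).
have -> : \sum_j w j * p j = \sum_l rho l * (w (s l) * g (s l)).
  rewrite -(sumr_perm (fun j => w j * p j) s); apply: eq_bigr => l _.
  by rewrite mulrCA divfK ?gt_eqF.
rewrite curve_funE -sumrB.
have -> : \sum_l (rho l - rho m) * (seg_len g s l x - w (s l) * g (s l)) =
    \sum_l (rho l * seg_len g s l x - rho l * (w (s l) * g (s l))) -
    rho m * \sum_(l : 'I_d) (seg_len g s l x - w (s l) * g (s l)).
  by rewrite mulr_sumr -sumrB; apply: eq_bigr => l _; ring.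
by rewrite [in p (s m) / g (s m) * _]sumrB sum_seg sum_u subrr mulr0 subr0.
Qed.

Hypothesis x_in_m : curve_x_prev g s m <= x <= curve_x g s m.

Let seg_below (l : 'I_d) : (l < m)%N -> seg_len g s l x = g (s l).
Proof.
move=> lm; apply: seg_len_full => //.
by case/andP: x_in_m => x_ge _; apply: le_trans x_ge; apply: curve_x_le_prev.
Qed.

Let seg_above (l : 'I_d) : (m < l)%N -> seg_len g s l x = 0.
Proof.
move=> ml; apply: seg_len_empty => //.
by case/andP: x_in_m => _ x_le; apply: le_trans x_le _; apply: curve_x_le_prev.
Qed.

Lemma knapsack_gap_term_ge0 (l : 'I_d) :
  0 <= (rho l - rho m) * (seg_len g s l x - w (s l) * g (s l)).
Proof.
case: (ltngtP l m) => [lm|ml|/val_inj->]; last by rewrite subrr mul0r.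
- by rewrite seg_below // mulr_ge0 // subr_ge0 // s_order // ltnW.
- by rewrite seg_above // sub0r mulr_le0 // ?oppr_le0 // subr_le0 s_order // ltnW.
Qed.

Hypothesis greedy :
  forall j1 j2, w j1 < 1 -> 0 < w j2 -> p j1 / g j1 <= p j2 / g j2.

Lemma greedy_full_below (l : 'I_d) : (l < m)%N -> rho m < rho l -> w (s l) = 1.
Proof.
move=> lm rho_ml; have [_ w_le1] := andP (w01 (s l)).
apply/eqP; rewrite eq_le w_le1 /= leNgt; apply/negP => w_lt1.
have w_above (n : 'I_d) : (m <= n)%N -> w (s n) = 0.
  move=> mn; have [w_ge0 _] := andP (w01 (s n)).
  apply/eqP; rewrite eq_le w_ge0 andbT leNgt; apply/negP => w_gt0.
  by have := greedy w_lt1 w_gt0; have := s_order mn; lra.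
have : x < curve_x_prev g s m.
  rewrite -(sumr_perm (fun j => w j * g j) s) (bigID (fun n : 'I_d => (n < m)%N)) /=.
  rewrite [X in _ + X]big1 ?addr0 => [|n]; last first.
    by rewrite -leqNgt => /w_above ->; rewrite mul0r.
  by apply: (ltr_sum_at lm) => [n|]; [exact: wg_le | rewrite gtr_pMl].
by case/andP: x_in_m => x_ge _; rewrite ltNge x_ge.
Qed.

Lemma greedy_empty_above (l : 'I_d) : (m < l)%N -> rho l < rho m -> w (s l) = 0.
Proof.
move=> ml rho_lm; have [w_ge0 _] := andP (w01 (s l)).
apply/eqP; rewrite eq_le w_ge0 andbT leNgt; apply/negP => w_gt0.
have w_below (n : 'I_d) : (n <= m)%N -> w (s n) = 1.
  move=> nm; have [_ w_le1] := andP (w01 (s n)).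
  apply/eqP; rewrite eq_le w_le1 /= leNgt; apply/negP => w_lt1.
  by have := greedy w_lt1 w_gt0; have := s_order nm; lra.
have : curve_x g s m < x.
  rewrite -(sumr_perm (fun j => w j * g j) s) (bigID (fun n : 'I_d => (n <= m)%N)) /=.
  rewrite [X in _ < X + _](eq_bigr (fun n => g (s n))) => [|n /w_below ->]; last first.
    by rewrite mul1r.
  apply: ltr_pwDr => //; rewrite (bigD1 l) -?ltnNge //=.
  by rewrite ltr_pwDl ?mulr_gt0 ?sumr_ge0.
by case/andP: x_in_m => _ x_le; rewrite ltNge x_le.
Qed.

Lemma greedy_gap_term_eq0 (l : 'I_d) :
  (rho l - rho m) * (seg_len g s l x - w (s l) * g (s l)) = 0.
Proof.
case: (ltngtP l m) => [lm|ml|/val_inj->]; last by rewrite subrr mul0r.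
- have [->|rho_ml] := eqVneq (rho l) (rho m); first by rewrite subrr mul0r.
  rewrite seg_below // greedy_full_below ?mul1r ?subrr ?mulr0 //.
  by rewrite lt_neqAle eq_sym rho_ml s_order // ltnW.
- have [->|rho_lm] := eqVneq (rho l) (rho m); first by rewrite subrr mul0r.
  rewrite seg_above // greedy_empty_above ?mul0r ?subrr ?mulr0 //.
  by rewrite lt_neqAle rho_lm s_order // ltnW.
Qed.

End AtSegment.

Lemma knapsack_le : \sum_j w j * p j <= curve_fun g p s (\sum_j w j * g j).
Proof.
have [m x_in_m] := exists_segment s g_sum1 x01.
rewrite -subr_ge0 (knapsack_gap m); apply: sumr_ge0 => l _.
exact: knapsack_gap_term_ge0.
Qed.

Lemma knapsack_greedy_eq :
  (forall j1 j2, w j1 < 1 -> 0 < w j2 -> p j1 / g j1 <= p j2 / g j2) ->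
  \sum_j w j * p j = curve_fun g p s (\sum_j w j * g j).
Proof.
move=> greedy; have [m x_in_m] := exists_segment s g_sum1 x01.
apply/eqP; rewrite eq_sym -subr_eq0 (knapsack_gap m); apply/eqP.
by apply: big1 => l _; apply: greedy_gap_term_eq0.
Qed.

End Knapsack.

Section TPMaps.
Variables (R : realType) (d : nat).
Implicit Types (f g p z : 'I_d -> R) (A B T : 'M[R]_d).

Lemma sum_delta_mull (a : 'I_d) f : \sum_i (i == a)%:R * f i = f a.
Proof.
rewrite (bigD1 a) //= eqxx mul1r big1 ?addr0 // => i /negbTE ->.
by rewrite mul0r.
Qed.

Lemma sum_delta (a : 'I_d) : \sum_i (i == a)%:R = 1 :> R.
Proof. by rewrite -[RHS](sum_delta_mull a (fun=> 1)); under [RHS]eq_bigr do rewrite mulr1. Qed.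

Lemma mxapp_mul A B f i : mxapp (A *m B) f i = mxapp A (mxapp B f) i.
Proof.
rewrite /mxapp; under eq_bigr do rewrite mxE mulr_suml.
rewrite exchange_big; apply: eq_bigr => k _; rewrite mulr_sumr.
by apply: eq_bigr => j _; rewrite mulrA.
Qed.

Lemma is_TP_mul g A B : is_TP g A -> is_TP g B -> is_TP g (A *m B).
Proof.
case=> A_ge0 A_col Ag [B_ge0 B_col Bg]; split.
- by move=> i j; rewrite mxE; apply: sumr_ge0 => k _; apply: mulr_ge0.
- move=> j; under eq_bigr do rewrite mxE.
  rewrite exchange_big /= -(B_col j); apply: eq_bigr => k _.
  by rewrite -mulr_suml A_col mul1r.
- by move=> i; rewrite mxapp_mul -Ag; apply: eq_bigr => j _; rewrite Bg.
Qed.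

Lemma TP_orbit_mxapp g p z y M : TP_orbit g p z -> is_TP g M ->
  (forall i, y i = mxapp M z i) -> TP_orbit g p y.
Proof.
case=> T [T_TP zE] M_TP yE; exists (M *m T); split; first exact: is_TP_mul.
by move=> i; rewrite yE mxapp_mul; apply: eq_bigr => j _; rewrite zE.
Qed.

Definition rank1_update A (u v : 'I_d -> R) : 'M[R]_d :=
  \matrix_(i, j) (A i j + u i * v j).

Lemma mxapp_rank1_update A u v f i :
  mxapp (rank1_update A u v) f i = mxapp A f i + u i * \sum_j v j * f j.
Proof.
rewrite /mxapp mulr_sumr -big_split /=.
by apply: eq_bigr => j _; rewrite mxE mulrDl mulrA.
Qed.

Lemma is_TP_rank1_update g A u v : is_TP g A ->
  \sum_i u i = 0 -> \sum_j v j * g j = 0 -> (forall i j, 0 <= A i j + u i * v j) ->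
  is_TP g (rank1_update A u v).
Proof.
case=> _ A_col Ag u_sum0 vg0 ge0; split.
- by move=> i j; rewrite mxE.
- move=> j; under eq_bigr do rewrite mxE.
  by rewrite big_split /= -mulr_suml u_sum0 mul0r addr0 A_col.
- by move=> i; rewrite mxapp_rank1_update vg0 mulr0 addr0 Ag.
Qed.

Lemma is_TP1 g : is_TP g 1%:M.
Proof.
split=> [i j|j|i]; rewrite /mxapp.
- by rewrite mxE ler0n.
- by under eq_bigr do rewrite mxE; apply: sum_delta.
- under eq_bigr do rewrite mxE eq_sym.
  exact: sum_delta_mull.
Qed.

End TPMaps.

Lemma extreme_point_line (R : realType) (d : nat) (S : ('I_d -> R) -> Prop)
    (r x y u : 'I_d -> R) (al be : R) :
  is_extreme_point S r -> S x -> S y -> 0 < al -> be < 0 ->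
  (forall i, x i = r i + al * u i) -> (forall i, y i = r i + be * u i) ->
  forall i, u i = 0.
Proof.
case=> _ r_ext Sx Sy al_gt0 be_lt0 xE yE i.
have gap_neq0 : al - be != 0 by rewrite gt_eqF // subr_gt0 (lt_trans be_lt0).
pose t := - be / (al - be).
have t_gt0 : 0 < t by rewrite divr_gt0 ?oppr_gt0 // subr_gt0 (lt_trans be_lt0).
have t_lt1 : t < 1 by rewrite ltr_pdivrMr ?subr_gt0 ?(lt_trans be_lt0) //; lra.
have rE j : r j = t * x j + (1 - t) * y j by rewrite xE yE /t; field.
have := r_ext x y Sx Sy t t_gt0 t_lt1 rE i.
rewrite xE yE => /addrI /eqP; rewrite -subr_eq0 -mulrBl mulf_eq0 (negbTE gap_neq0).
by move/eqP.
Qed.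

Definition unit_diff {R : realType} {d : nat} (a a' : 'I_d) (i : 'I_d) : R :=
  (i == a)%:R - (i == a')%:R.

Section TwoLevel.
Variables (R : realType) (d : nat) (g p : 'I_d -> R) (a a' : 'I_d).
Hypotheses (g_gt0 : forall i, 0 < g i) (aa' : a != a').

Local Notation u := (@unit_diff R d a a').

Let sum_u : \sum_i u i = 0.
Proof. by rewrite sumrB !sum_delta subrr. Qed.

Let u_a : u a = 1.
Proof. by rewrite /u /unit_diff eqxx (negbTE aa') subr0. Qed.

Let u_a' : u a' = -1.
Proof. by rewrite /u /unit_diff eqxx eq_sym (negbTE aa') sub0r. Qed.

Let u_other i : i != a -> i != a' -> u i = 0.
Proof. by rewrite /u /unit_diff => /negbTE-> /negbTE->; rewrite subrr. Qed.

(* Adds eps/g_j1 to T_{a j1} and eps/g_j2 to T_{a' j2}, subtracting the same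
   amounts from T_{a' j1} and T_{a j2}; the update maps g to 0. *)
Lemma TP_orbit_transfer T r j1 j2 : is_TP g T -> (forall i, r i = mxapp T p i) ->
  j1 != j2 -> 0 < T a' j1 -> 0 < T a j2 ->
  exists2 eps, 0 < eps &
    TP_orbit g p (fun i => r i + eps * (p j1 / g j1 - p j2 / g j2) * unit_diff a a' i).
Proof.
move=> T_TP rE j12 Ta'j1_gt0 Taj2_gt0; have [T_ge0 _ _] := T_TP.
pose eps := Num.min (T a' j1 * g j1) (T a j2 * g j2).
have eps_gt0 : 0 < eps by rewrite lt_min !mulr_gt0.
have eps_j1 : eps / g j1 <= T a' j1 by rewrite ler_pdivrMr // ge_min lexx.
have eps_j2 : eps / g j2 <= T a j2 by rewrite ler_pdivrMr // ge_min lexx orbT.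
pose v b : R := eps * ((b == j1)%:R / g j1 - (b == j2)%:R / g j2).
have sum_v f : \sum_b v b * f b = eps * (f j1 / g j1 - f j2 / g j2).
  rewrite -(sum_delta_mull j1 (fun b => f b / g j1)).
  rewrite -(sum_delta_mull j2 (fun b => f b / g j2)).
  by rewrite -sumrB mulr_sumr; apply: eq_bigr => b _; rewrite /v; ring.
exists eps => //; exists (rank1_update T u v); split; last first.
  by move=> i; rewrite mxapp_rank1_update -rE sum_v [u i * _]mulrC.
apply: is_TP_rank1_update => //; first by rewrite sum_v !divff ?gt_eqF // subrr mulr0.
move=> i b.
case: (eqVneq i a) => [-> | ia].
  rewrite u_a mul1r; have [-> | bj2] := eqVneq b j2.
    by rewrite /v eqxx eq_sym (negbTE j12) /= mul0r sub0r mul1r mulrN; lra.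
  rewrite /v (negbTE bj2) /= mul0r subr0 addr_ge0 // mulr_ge0 ?(ltW eps_gt0) //.
  by rewrite divr_ge0 // ltW.
case: (eqVneq i a') => [-> | ia'].
  rewrite u_a' mulN1r; have [-> | bj1] := eqVneq b j1.
    by rewrite /v eqxx (negbTE j12) /= mul1r mul0r subr0; lra.
  rewrite /v (negbTE bj1) /= mul0r sub0r mulrN opprK addr_ge0 // mulr_ge0 ?(ltW eps_gt0) //.
  by rewrite divr_ge0 // ltW.
by rewrite u_other // mul0r addr0.
Qed.

(* The matrix used is the identity outside rows and columns a, a', where it
   reads ((1 - k g_a', k g_a), (k g_a', 1 - k g_a)). *)
Lemma TP_orbit_partial_swap z k : TP_orbit g p z -> 0 <= k ->
  k * g a <= 1 -> k * g a' <= 1 ->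
  TP_orbit g p (fun i => z i + k * (g a * z a' - g a' * z a) * unit_diff a a' i).
Proof.
move=> z_orbit k_ge0 kga kga'.
pose v b : R := k * (g a * (b == a')%:R - g a' * (b == a)%:R).
have sum_v f : \sum_b v b * f b = k * (g a * f a' - g a' * f a).
  rewrite -(sum_delta_mull a' (fun b => g a * f b)).
  rewrite -(sum_delta_mull a (fun b => g a' * f b)).
  by rewrite -sumrB mulr_sumr; apply: eq_bigr => b _; rewrite /v; ring.
apply: (@TP_orbit_mxapp _ _ _ _ z _ (rank1_update 1%:M u v)) => // [|i]; last first.
  rewrite mxapp_rank1_update sum_v [u i * _]mulrC /mxapp.
  by under eq_bigr do rewrite mxE eq_sym; rewrite sum_delta_mull.
apply: is_TP_rank1_update (is_TP1 g) sum_u _ _.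
  by rewrite sum_v [g a * _]mulrC subrr mulr0.
move=> i b; rewrite mxE.
case: (eqVneq i a) => [-> | ia].
  rewrite u_a mul1r /v; have [-> | ba] := eqVneq b a.
    by rewrite (negbTE aa') /=; lra.
  rewrite /= mulr0 subr0 add0r.
  exact: mulr_ge0 k_ge0 (mulr_ge0 (ltW (g_gt0 a)) (ler0n _ _)).
case: (eqVneq i a') => [-> | ia'].
  rewrite u_a' mulN1r /v; have [-> | ba'] := eqVneq b a'.
    by rewrite eq_sym (negbTE aa') /=; lra.
  rewrite /= mulr0 sub0r add0r mulrN opprK.
  exact: mulr_ge0 k_ge0 (mulr_ge0 (ltW (g_gt0 a')) (ler0n _ _)).
by rewrite u_other // mul0r addr0.
Qed.

Lemma extreme_TP_monotone T r j1 j2 : is_TP g T -> (forall i, r i = mxapp T p i) ->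
  is_extreme_point (TP_orbit g p) r -> r a' / g a' <= r a / g a ->
  0 < T a' j1 -> 0 < T a j2 -> p j1 / g j1 <= p j2 / g j2.
Proof.
move=> T_TP rE r_ext ratio Ta'j1_gt0 Taj2_gt0; rewrite leNgt; apply/negP => rho_lt.
have j12 : j1 != j2 by apply: contraTneq rho_lt => ->; rewrite ltxx.
have [eps eps_gt0 x_orbit] := TP_orbit_transfer T_TP rE j12 Ta'j1_gt0 Taj2_gt0.
set al := eps * _ in x_orbit; set x := fun i => _ in x_orbit.
have al_gt0 : 0 < al by rewrite mulr_gt0 // subr_gt0.
have ga := g_gt0 a; have ga' := g_gt0 a'.
pose k := Num.min (g a)^-1 (g a')^-1.
have k_gt0 : 0 < k by rewrite lt_min !invr_gt0 ga ga'.
have kga : k * g a <= 1 by rewrite -ler_pdivlMr // div1r ge_min lexx.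
have kga' : k * g a' <= 1 by rewrite -ler_pdivlMr // div1r ge_min lexx orbT.
have k_sum : 1 < k * (g a + g a').
  rewrite /k minEle mulrDr; case: (leP (g a)^-1 (g a')^-1) => _.
    by rewrite mulVf ?gt_eqF // ltrDl mulr_gt0 ?invr_gt0.
  by rewrite [_ * g a']mulVf ?gt_eqF // ltrDr mulr_gt0 ?invr_gt0.
have y_orbit := TP_orbit_partial_swap x_orbit (ltW k_gt0) kga kga'.
have cross : g a * r a' <= g a' * r a.
  have -> : g a * r a' = r a' / g a' * (g a * g a') by field; rewrite gt_eqF.
  have -> : g a' * r a = r a / g a * (g a * g a') by field; rewrite gt_eqF.
  by rewrite ler_pM2r ?mulr_gt0.
(* The swap overshoots r because k (g_a + g_a') > 1 and r_a'/g_a' <= r_a/g_a. *)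
have be_lt0 : al + k * (g a * x a' - g a' * x a) < 0.
  rewrite /x u_a u_a'; nra.
suff : u a = 0 by rewrite u_a => /eqP; rewrite oner_eq0.
by apply: (extreme_point_line r_ext x_orbit y_orbit al_gt0 be_lt0) => i //; rewrite /x; ring.
Qed.

End TwoLevel.

Section Thermomajorization.
Variables (R : realType) (d : nat) (g p : 'I_d -> R).
Hypotheses (g_gt0 : forall i, 0 < g i) (g_sum1 : \sum_i g i = 1).
Implicit Types (T : 'M[R]_d) (s pi : 'S_d) (f r z : 'I_d -> R).

Let g_ge0 i : 0 <= g i. Proof. exact: ltW. Qed.

Lemma curve_x_mxapp T s k f : curve_x (mxapp T f) s k =
  \sum_j (\sum_(i : 'I_d | (i <= k)%N) T (s i) j) * f j.
Proof. by under [RHS]eq_bigr do rewrite mulr_suml; rewrite exchange_big. Qed.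

Lemma TP_partial_colsum01 T s k j : is_TP g T ->
  0 <= \sum_(i : 'I_d | (i <= k)%N) T (s i) j <= 1.
Proof.
case=> T_ge0 T_col _; rewrite sumr_ge0 //= -(T_col j).
rewrite -(sumr_perm (fun i => T i j) s) [leRHS]big_mkcond /=.
exact: ler_sum_subset.
Qed.

Lemma TP_orbit_curve_le z s pi k : is_beta_order g p pi -> TP_orbit g p z ->
  curve_x z s k <= curve_fun g p pi (curve_x g s k).
Proof.
move=> pi_order [T [T_TP zE]]; have [_ _ Tg] := T_TP.
have -> : curve_x z s k = curve_x (mxapp T p) s k by apply: eq_bigr.
have -> : curve_x g s k = curve_x (mxapp T g) s k by apply: eq_bigr => i _; rewrite Tg.
by rewrite !curve_x_mxapp; apply: knapsack_le => // j; apply: TP_partial_colsum01.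
Qed.

Lemma extreme_tightly_thermomajorized r : is_extreme_point (TP_orbit g p) r ->
  tightly_thermomajorizes g p r.
Proof.
move=> r_ext; have [[T [T_TP rE]] _] := r_ext; have [T_ge0 T_col Tg] := T_TP.
move=> s s_order k _ pi pi_order.
have -> : curve_y r s k = curve_x (mxapp T p) s k by apply: eq_bigr.
have -> : curve_x g s k = curve_x (mxapp T g) s k by apply: eq_bigr => i _; rewrite Tg.
rewrite !curve_x_mxapp; apply: knapsack_greedy_eq => // [j|j1 j2 w_lt1 w_gt0].
  exact: TP_partial_colsum01.
have [i /andP[ik Tj2_gt0]] :=
  psumr_neq0P (fun i _ => T_ge0 (s i) j2) (elimF eqP (gt_eqF w_gt0)).
have rest_gt0 : 0 < \sum_(i : 'I_d | ~~ (i <= k)%N) T (s i) j1.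
  move: w_lt1; rewrite -[X in _ < X](T_col j1).
  rewrite -(sumr_perm (fun i => T i j1) s) [ltRHS](bigID (fun i : 'I_d => (i <= k)%N)) /=.
  by rewrite ltrDl.
have [i' /andP[ki' Tj1_gt0]] :=
  psumr_neq0P (fun i _ => T_ge0 (s i) j1) (elimF eqP (gt_eqF rest_gt0)).
have ii' : (i <= i')%N by rewrite ltnW // (leq_ltn_trans ik) // ltnNge.
apply: (extreme_TP_monotone g_gt0 _ T_TP rE r_ext (s_order _ _ ii') Tj1_gt0 Tj2_gt0).
by rewrite (inj_eq perm_inj); apply: contraNneq ki' => <-.
Qed.

Lemma curve_fun0 pi : curve_fun g p pi 0 = 0.
Proof. by rewrite curve_funE big1 // => l _; rewrite seg_len0 // mulr0. Qed.

Lemma curve_fun1 pi : curve_fun g p pi 1 = \sum_i p i.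
Proof.
rewrite curve_funE -(sumr_perm p pi); apply: eq_bigr => l _.
by rewrite seg_len1 // divfK ?gt_eqF.
Qed.

Section TightLift.
Variables (r : 'I_d -> R) (pi sg : 'S_d).

Definition tight_lift : 'M[R]_d := \matrix_(a, b)
  ((seg_len g pi ((pi^-1)%g b) (curve_x g sg ((sg^-1)%g a)) -
    seg_len g pi ((pi^-1)%g b) (curve_x_prev g sg ((sg^-1)%g a))) / g b).

Lemma tight_lift_ge0 a b : 0 <= tight_lift a b.
Proof.
rewrite mxE divr_ge0 // subr_ge0 seg_len_le //.
exact: curve_x_prev_le.
Qed.

Lemma tight_lift_col b : \sum_a tight_lift a b = 1.
Proof.
pose F m := seg_len g pi ((pi^-1)%g b) (curve_x_prev g sg m).
rewrite -(sumr_perm (fun a => tight_lift a b) sg).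
rewrite (eq_bigr (fun m : 'I_d => (F m.+1 - F m) / g b)) => [|m _]; last first.
  by rewrite mxE permK /F curve_x_prevS.
rewrite -mulr_suml -(big_mkord xpredT (fun m => F m.+1 - F m)) telescope_sumr //.
rewrite /F curve_x_prev_full curve_x_prev0 g_sum1 seg_len1 // seg_len0 // subr0.
by rewrite permKV divff ?gt_eqF.
Qed.

Lemma tight_lift_g a : mxapp tight_lift g a = g a.
Proof.
set m := (sg^-1)%g a.
have seg_sum x : 0 <= x <= 1 -> \sum_b seg_len g pi ((pi^-1)%g b) x = x.
  by move=> x01; rewrite -(sumr_perm _ pi); under eq_bigr do rewrite permK; apply: sum_seg_len.
have x_le1 : curve_x g sg m <= 1 by rewrite -g_sum1 curve_x_le_sum.
have prev_le := curve_x_prev_le sg m g_ge0.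
rewrite /mxapp; under eq_bigr do rewrite mxE divfK ?gt_eqF //.
rewrite sumrB !seg_sum ?sumr_ge0 ?x_le1 ?(le_trans prev_le) //.
by rewrite curve_xE permKV addrC addKr.
Qed.

Hypothesis tight :
  forall m : 'I_d, curve_x r sg m = curve_fun g p pi (curve_x g sg m).

Let tight_prev (m : 'I_d) :
  curve_x_prev r sg m = curve_fun g p pi (curve_x_prev g sg m).
Proof.
case: m => [[|m] lt_md]; first by rewrite !curve_x_prev0 curve_fun0.
by rewrite !curve_x_prevS (tight (Ordinal (ltnW lt_md))).
Qed.

Lemma tight_lift_p a : mxapp tight_lift p a = r a.
Proof.
have r_a : r a = curve_x r sg ((sg^-1)%g a) - curve_x_prev r sg ((sg^-1)%g a).
  by rewrite curve_xE permKV addrC addKr.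
rewrite r_a tight tight_prev !curve_funE -sumrB /mxapp -(sumr_perm _ pi).
by apply: eq_bigr => l _; rewrite mxE permK; ring.
Qed.

Lemma tight_in_orbit : TP_orbit g p r.
Proof.
exists tight_lift; split=> [|a]; last by rewrite tight_lift_p.
by split; [exact: tight_lift_ge0 | exact: tight_lift_col | exact: tight_lift_g].
Qed.

End TightLift.

Lemma tightly_thermomajorized_extreme r :
  is_state p -> is_state r -> tightly_thermomajorizes g p r ->
  is_extreme_point (TP_orbit g p) r.
Proof.
move=> [_ p_sum1] [_ r_sum1] r_tight.
have [s s_order] := beta_order_exists g r.
have [pi pi_order] := beta_order_exists g p.
have tight (m : 'I_d) : curve_x r s m = curve_fun g p pi (curve_x g s m).
  have [lt_md | ge_dm] := ltnP m.+1 d; first exact: r_tight.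
  have m_last : m.+1 = d by apply/eqP; rewrite eqn_leq ltn_ord.
  by rewrite !curve_x_last // g_sum1 curve_fun1 r_sum1 p_sum1.
split; first exact: tight_in_orbit tight.
move=> x y x_orbit y_orbit t t_gt0 t_lt1 rE; apply: (@curve_x_inj _ _ _ _ s) => m.
have r_comb : curve_x r s m = t * curve_x x s m + (1 - t) * curve_x y s m.
  by rewrite /curve_x !mulr_sumr -big_split; apply: eq_bigr => i _; rewrite rE.
have x_le := TP_orbit_curve_le s m pi_order x_orbit.
have y_le := TP_orbit_curve_le s m pi_order y_orbit.
move: r_comb x_le y_le; rewrite tight.
set V := curve_fun _ _ _ _; set X := curve_x x s m; set Y := curve_x y s m.
nra.
Qed.

End Thermomajorization.

Section Gibbs.
Variables (R : realType) (d : nat) (beta : R) (E : 'I_d -> R) (i0 : 'I_d).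

Lemma partition_function_gt0 : 0 < \sum_j qfac beta E j i0.
Proof.
rewrite (bigD1 i0) //= ltr_pwDl ?expR_gt0 // sumr_ge0 // => j _.
by rewrite ltW ?expR_gt0.
Qed.

Lemma gibbs_gt0 i : 0 < gibbs beta E i0 i.
Proof. by rewrite divr_gt0 ?expR_gt0 ?partition_function_gt0. Qed.

Lemma gibbs_sum1 : \sum_i gibbs beta E i0 i = 1.
Proof. by rewrite -mulr_suml divff // gt_eqF ?partition_function_gt0. Qed.

End Gibbs.

Theorem mainTheorem2 (R : realType) (d : nat) (hd : (2 <= d)%N)
  (beta : R) (hbeta : 0 < beta)
  (E : 'I_d -> R) (i0 : 'I_d) (hi0 : nat_of_ord i0 = 0%N) (hE0 : E i0 = 0)
  (hEinj : injective E)
  (p r : 'I_d -> R) (hp : is_state p) (hr : is_state r) :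
  is_extreme_point (TP_orbit (gibbs beta E i0) p) r <->
  tightly_thermomajorizes (gibbs beta E i0) p r.
Proof.
have g_gt0 := gibbs_gt0 beta E i0; have g_sum1 := gibbs_sum1 beta E i0.
split; [exact: extreme_tightly_thermomajorized | exact: tightly_thermomajorized_extreme].
Qed.
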